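(* Let $G$ be a graph with no induced $P_7$, $C_4$, $C_6$ or $C_7$. Let $C=v_1-v_2-v_3-v_4-v_5-v_1$ be an induced $C_5$ of $G$ and let $K$ be a component of $G[S_0]$ that is not a clique. Then, with indices modulo $5$: (1) every vertex in $N(K)\cap S(v_{i-2},v_{i+2})$ is complete to $K$; (2) $N(K)\cap S(v_{i-1},v_i,v_{i+1})$ or $N(K)\cap S(v_{i+1},v_{i+2},v_{i+3})$ is empty; (3) if $p,q\in N(K)$ are non-adjacent, then $p\in S(v_{i-1},v_i,v_{i+1})$ and $q\in S(v_{i-2},v_{i+2})$ for some $i$ (after possibly swapping $p$ and $q$); (4) $N(K)$ cannot contain four vertices $p,p',q,q'$ with $p\in S(v_{i-1},v_i,v_{i+1})$, $q\in S(v_{i-2},v_{i+2})$, $p'\in S(v_i,v_{i+1},v_{i+2})$ and $q'\in S(v_{i-2},v_{i-1})$.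
   Context: For $X\subseteq V(C)$, $S(X)$ is the set of vertices $v\in V(G)\setminus V(C)$ with $N(v)\cap V(C)=X$ (set braces are omitted, e.g. $S(v_1,v_2)=S(\{v_1,v_2\})$); $S_0=S(\emptyset)$. $N(K)$ is the set of vertices outside $K$ having a neighbor in $K$. *)

(* a finite simple graph is a symmetric irreflexive relation
   e on a finType T. *)
From mathcomp Require Import all_boot.
Set Implicit Arguments. Unset Strict Implicit. Unset Printing Implicit Defensive.

Section Defs.
Variables (T : finType) (e : rel T).

Definition induced_path (k : nat) (f : 'I_k -> T) : Prop :=
  injective f /\
  forall i j : 'I_k, e (f i) (f j) = ((val j == (val i).+1) || (val i == (val j).+1)).

Definition induced_cycle (k : nat) (f : 'I_k -> T) : Prop :=
  injective f /\
  forall i j : 'I_k,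
    e (f i) (f j) = ((val j == (val i).+1 %% k) || (val i == (val j).+1 %% k)).

Definition has_induced_path (k : nat) : Prop := exists f : 'I_k -> T, induced_path f.
Definition has_induced_cycle (k : nat) : Prop := exists f : 'I_k -> T, induced_cycle f.

Definition sh (i : 'I_5) (d : nat) : 'I_5 := inord ((val i + d) %% 5).

Variable v : 'I_5 -> T.

Definition VC : {set T} := [set v i | i : 'I_5].

Definition Sset (X : {set T}) : {set T} :=
  [set x | (x \notin VC) && ([set y in VC | e x y] == X)].

Definition S0 : {set T} := Sset set0.

Definition rS0 : rel T := fun a b => [&& e a b, a \in S0 & b \in S0].

Definition is_component_S0 (K : {set T}) : Prop :=
  exists2 x0, x0 \in S0 & K = [set y | connect rS0 x0 y].

Definition is_clique (K : {set T}) : Prop :=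
  forall x y, x \in K -> y \in K -> x != y -> e x y.

Definition NK (K : {set T}) : {set T} :=
  [set x | (x \notin K) && [exists y in K, e x y]].

Definition complete_to (p : T) (K : {set T}) : Prop := forall y, y \in K -> e p y.

Definition S3 (i : 'I_5) : {set T} := Sset [set v (sh i 4); v i; v (sh i 1)].
Definition S2 (i : 'I_5) : {set T} := Sset [set v (sh i 3); v (sh i 2)].

End Defs.

(* Record a vertex x outside C by its profile, the set of indices j with x ~ v_j.
   For non-adjacent p, q in N(K) the excluded induced subgraphs become constraints
   on the pair of profiles.  An induced P7 running through K and around C is avoided
   only if a vertex seeing v_a but none of v_(a+1), v_(a+2), v_(a+3) is complete to
   K, and one seeing v_a but neither v_(a+1) nor v_(a+2) reaches all of K within
   distance two.  A common neighbour in K, or an induced path p - k1 - k2 - q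
   inside K, together with an induced path of C between private neighbours of q and
   p would close an induced C6 or C7, and a few more configurations give a C4.  A
   finite check over all pairs of profiles leaves only {i-1, i, i+1} paired with
   {i-2, i+2}, which is (3).  Then (1), (2) and (4) follow from (3) plus one more
   excluded P7, C4 or C6. *)

From mathcomp Require Import all_boot.
Set Implicit Arguments. Unset Strict Implicit. Unset Printing Implicit Defensive.

Lemma mem_iota_ord n (i : 'I_n) : (i : nat) \in iota 0 n.
Proof. by rewrite mem_iota ltn_ord. Qed.

Section InducedPatterns.
Variables (T : finType) (e : rel T).
Hypotheses (e_sym : symmetric e) (e_irr : irreflexive e).

(* adj_pattern pat 0 s: entries i < j of s are adjacent exactly when pat i j.  For
   an explicit s it unfolds under cbn into a conjunction of adjacency tests. *)
Fixpoint adj_row (pat : nat -> nat -> bool) (i : nat) (x : T) (j : nat) (s : seq T) :=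
  if s is y :: s' then (e x y == pat i j) && adj_row pat i x j.+1 s' else true.

Fixpoint adj_pattern (pat : nat -> nat -> bool) (i : nat) (s : seq T) :=
  if s is x :: s' then adj_row pat i x i.+1 s' && adj_pattern pat i.+1 s' else true.

Lemma adj_rowP pat i x j s (x0 : T) k :
  adj_row pat i x j s -> k < size s -> e x (nth x0 s k) = pat i (j + k).
Proof.
elim: s j k => [|y s IH] j [|k] //= /andP [/eqP exy row] ltk; first by rewrite addn0.
by rewrite (IH _ _ row ltk) addSnnS.
Qed.

Lemma adj_patternP pat i s (x0 : T) k l : adj_pattern pat i s -> k < l < size s ->
  e (nth x0 s k) (nth x0 s l) = pat (i + k) (i + l).
Proof.
elim: s i k l => [|x s IH] i k l; first by rewrite ltn0 andbF.
case: k l => [|k] [|l] //= /andP [row pat_s] => [ltl | ltkl].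
- by rewrite (adj_rowP _ row) // addn0 addSnnS.
- by rewrite (IH _ _ _ pat_s) // !addSnnS.
Qed.

Definition simple_pattern (n : nat) (pat : nat -> nat -> bool) :=
  all (fun i => ~~ pat i i && all (fun j => pat i j == pat j i) (iota 0 n)) (iota 0 n).

(* Distinct indices are adjacent or told apart by a third one, so any
   realisation of such a pattern is injective. *)
Definition separating_pattern (n : nat) (pat : nat -> nat -> bool) :=
  all (fun i => all (fun j =>
    (i != j) ==> pat i j || has (fun k => pat i k != pat j k) (iota 0 n)) (iota 0 n))
    (iota 0 n).

Lemma nth_adj_pattern n pat (x0 : T) s :
  size s = n -> adj_pattern pat 0 s -> simple_pattern n pat ->
  forall i j : 'I_n, e (nth x0 s i) (nth x0 s j) = pat i j.
Proof.
move=> sz adj /allP simple i j.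
have /andP [pat_jj /allP /(_ i (mem_iota_ord i)) /eqP pat_ji] := simple j (mem_iota_ord j).
case: (ltngtP i j) => [ltij | ltji | /val_inj ->].
- by rewrite (adj_patternP _ adj) ?ltij ?sz ?ltn_ord.
- by rewrite e_sym (adj_patternP _ adj) ?ltji ?sz ?ltn_ord.
- by rewrite e_irr (negbTE pat_jj).
Qed.

Lemma induced_of_pattern n pat (x0 : T) s :
  size s = n -> adj_pattern pat 0 s -> simple_pattern n pat -> separating_pattern n pat ->
  exists f : 'I_n -> T, injective f /\ forall i j : 'I_n, e (f i) (f j) = pat i j.
Proof.
move=> sz adj simple /allP sep; have adjf := nth_adj_pattern x0 sz adj simple.
exists (fun i => nth x0 s i); split=> // i j fij.
apply/val_inj/eqP; apply: contraT => neqij.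
move/allP: (sep i (mem_iota_ord i)) => /(_ j (mem_iota_ord j)); rewrite neqij.
case/orP => [|/hasP [k]]; first by rewrite -adjf fij e_irr.
rewrite mem_iota => /= ltk; rewrite -[k]/(val (Ordinal ltk)) -!adjf fij.
by rewrite eqxx.
Qed.

Definition path_pat (i j : nat) := (j == i.+1) || (i == j.+1).
Definition cycle_pat (n i j : nat) := (j == i.+1 %% n) || (i == j.+1 %% n).

Lemma has_induced_path_of_seq n (x0 : T) s :
  size s = n -> adj_pattern path_pat 0 s ->
  simple_pattern n path_pat -> separating_pattern n path_pat -> has_induced_path e n.
Proof.
by move=> sz adj simple sep; have [f] := induced_of_pattern x0 sz adj simple sep; exists f.
Qed.

Lemma has_induced_cycle_of_seq n (x0 : T) s :
  size s = n -> adj_pattern (cycle_pat n) 0 s ->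
  simple_pattern n (cycle_pat n) -> separating_pattern n (cycle_pat n) ->
  has_induced_cycle e n.
Proof.
by move=> sz adj simple sep; have [f] := induced_of_pattern x0 sz adj simple sep; exists f.
Qed.

(* Opposite vertices of a 4-cycle have the same neighbours, hence the explicit
   disequalities. *)
Lemma has_induced_C4 a b c d :
  adj_pattern (cycle_pat 4) 0 [:: a; b; c; d] -> a != c -> b != d -> has_induced_cycle e 4.
Proof.
move=> adj neac nebd; have adjf := nth_adj_pattern (s := [:: a; b; c; d]) a erefl adj erefl.
exists (fun i => nth a [:: a; b; c; d] i); split=> // i j fij.
apply/val_inj/eqP; apply: contraT => neqij.
have : ~~ e (nth a [:: a; b; c; d] i) (nth a [:: a; b; c; d] j) by rewrite fij e_irr.
rewrite adjf; move: neqij fij.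
case: i j => -[|[|[|[|?]]]] ? [[|[|[|[|?]]]] ?] //= _ fij _.
all: by rewrite ?fij ?eqxx in neac nebd.
Qed.
End InducedPatterns.

(* A profile is the 0/1-sequence of neighbours among v_0, ..., v_4, indices read
   modulo 5.  cyc_set i ds is the profile of S(v_(i+d) | d in ds); thus
   cyc_set i [:: 4; 0; 1] and cyc_set i [:: 3; 2] are the profiles of
   S(v_(i-1), v_i, v_(i+1)) and S(v_(i-2), v_(i+2)). *)
Definition bit (A : seq bool) (j : nat) : bool := nth false A (j %% 5).

Definition cyc_set (i : nat) (ds : seq nat) : seq bool :=
  mkseq (fun j => has (fun d => j == i + d %[mod 5]) ds) 5.

Definition has_gap (A : seq bool) : bool :=
  has (fun a => [&& bit A a, ~~ bit A (a + 1) & bit A (a + 2)]) (iota 0 5).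

Definition gap_after (A : seq bool) (n : nat) : bool :=
  has (fun a => bit A a && all (fun k => ~~ bit A (a + k)) (iota 1 n)) (iota 0 5).

(* A subpath v_x ... v_(x+n) of C from a private neighbour of the vertex with
   profile B to a private neighbour of the one with profile A, with interior seen by
   neither: joined by an induced path outside C it closes an induced cycle. *)
Definition link (A B : seq bool) (n : nat) : bool :=
  has (fun x => [&& bit B x, ~~ bit A x, bit A (x + n), ~~ bit B (x + n) &
                    all (fun k => ~~ bit A (x + k) && ~~ bit B (x + k)) (iota 1 n.-1)])
      (iota 0 5).

Definition meets (A B : seq bool) : bool := has (fun j => bit A j && bit B j) (iota 0 5).

Definition meets_twice (A B : seq bool) : bool :=
  has (fun a => [&& bit A a, bit B a, bit A (a + 2) & bit B (a + 2)]) (iota 0 5).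

Definition classified (A B : seq bool) : bool :=
  has (fun i => (A == cyc_set i [:: 4; 0; 1]) && (B == cyc_set i [:: 3; 2])
             || (B == cyc_set i [:: 4; 0; 1]) && (A == cyc_set i [:: 3; 2])) (iota 0 5).

(* The constraints on the profiles A, B of non-adjacent p, q in N(K); c stands for
   "p and q have a common neighbour in K". *)
Definition admissible (A B : seq bool) (c : bool) : bool :=
  [&& has (bit A) (iota 0 5), has (bit B) (iota 0 5), ~~ has_gap A, ~~ has_gap B,
      ~~ (gap_after A 3 && gap_after B 3), (gap_after A 3 || gap_after B 3) ==> c,
      c ==> ~~ meets A B, c ==> ~~ link A B 2 && ~~ link B A 2, ~~ meets_twice A B &
      ~~ c && (gap_after A 2 || gap_after B 2) ==>
        [&& ~~ link A B 1, ~~ link B A 1, ~~ link A B 2 & ~~ link B A 2]].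

Fixpoint bitseqs (n : nat) : seq (seq bool) :=
  if n is n'.+1 then [seq b :: s | b <- [:: true; false], s <- bitseqs n'] else [:: [::]].

Lemma mem_bitseqs n (s : seq bool) : size s = n -> s \in bitseqs n.
Proof.
move=> <-; elim: s => //= b s IH.
by rewrite !mem_cat; case: b; rewrite map_f ?orbT.
Qed.

Lemma admissible_classified A B c :
  size A = 5 -> size B = 5 -> admissible A B c -> classified A B.
Proof.
have check : all (fun A => all (fun B => all (fun c => admissible A B c ==> classified A B)
  [:: true; false]) (bitseqs 5)) (bitseqs 5) by vm_compute.
move=> /mem_bitseqs sA /mem_bitseqs sB; apply/implyP.
by move/allP: check => /(_ A sA) /allP /(_ B sB) /allP; apply; case: c.
Qed.

Lemma cyc_set_mod i ds : cyc_set (i %% 5) ds = cyc_set i ds.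
Proof. by apply: eq_mkseq => j; apply: eq_has => d; rewrite modnDml. Qed.

Lemma classifiedP A B : classified A B ->
  exists i : 'I_5, (A = cyc_set i [:: 4; 0; 1] /\ B = cyc_set i [:: 3; 2]) \/
                   (B = cyc_set i [:: 4; 0; 1] /\ A = cyc_set i [:: 3; 2]).
Proof.
case/hasP => i; rewrite mem_iota => /= lti.
by case/orP => /andP [/eqP -> /eqP ->]; exists (Ordinal lti); [left | right].
Qed.

Section InducedC5.
Variables (T : finType) (e : rel T).
Hypotheses (e_sym : symmetric e) (e_irr : irreflexive e).
Hypotheses (noP7 : ~ has_induced_path e 7) (noC4 : ~ has_induced_cycle e 4).
Hypotheses (noC6 : ~ has_induced_cycle e 6) (noC7 : ~ has_induced_cycle e 7).
Variable v : 'I_5 -> T.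
Hypothesis hC : induced_cycle e v.
Variable K : {set T}.
Hypotheses (hK : is_component_S0 e v K) (hKnc : ~ is_clique e K).

Definition vc (j : nat) : T := v (inord (j %% 5)).

Lemma vc_val (i : 'I_5) : vc i = v i.
Proof. by rewrite /vc modn_small ?ltn_ord // inord_val. Qed.

Lemma vc_mod j : vc (j %% 5) = vc j.
Proof. by rewrite /vc modn_mod. Qed.

Lemma val_sh (i : 'I_5) d : val (sh i d) = (i + d) %% 5.
Proof. by rewrite /sh /= inordK ?ltn_pmod. Qed.

Lemma vc_adj j k : e (vc j) (vc k) = (k == j.+1 %[mod 5]) || (j == k.+1 %[mod 5]).
Proof. by rewrite /vc hC.2 /= !inordK ?ltn_pmod // -!(addn1 (_ %% 5)) !modnDml !addn1. Qed.

Lemma vc_eq j k : (vc j == vc k) = (j == k %[mod 5]).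
Proof. by rewrite (inj_eq hC.1) -val_eqE /= !inordK ?ltn_pmod. Qed.

Lemma vc_in_VC j : vc j \in VC v.
Proof. exact: imset_f. Qed.

Lemma VC_vc x : x \in VC v -> exists j, x = vc j.
Proof. by case/imsetP => i _ ->; exists i; rewrite vc_val. Qed.

Definition prof (x : T) : seq bool := mkseq (fun j => e x (vc j)) 5.

Lemma size_prof x : size (prof x) = 5.
Proof. exact: size_mkseq. Qed.

Lemma bit_prof x j : bit (prof x) j = e x (vc j).
Proof. by rewrite /bit nth_mkseq ?ltn_pmod // vc_mod. Qed.

Lemma K_S0 k : k \in K -> k \in S0 e v.
Proof.
case: hK => x0 x0S0 ->; rewrite inE => /connectP [p + ->].
by elim: p x0 x0S0 => //= y p IH x xS0 /andP [/and3P [_ _ yS0]]; apply: IH.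
Qed.

Lemma K_vc k j : k \in K -> e k (vc j) = false.
Proof.
move/K_S0; rewrite inE => /andP [_ /eqP noC]; apply/negP => kj.
suff : vc j \in set0 by rewrite inE.
by rewrite -noC inE vc_in_VC.
Qed.

Lemma vc_K k j : k \in K -> e (vc j) k = false.
Proof. by rewrite e_sym; apply: K_vc. Qed.

Lemma K_notin_VC k : k \in K -> k \notin VC v.
Proof. by move/K_S0; rewrite inE => /andP []. Qed.

Lemma NK_notin_K x : x \in NK e K -> x \notin K.
Proof. by rewrite inE => /andP []. Qed.

Lemma NK_nbr x : x \in NK e K -> exists2 k, k \in K & e x k.
Proof. by rewrite inE => /andP [_ /existsP [k /andP [kK xk]]]; exists k. Qed.

Lemma NK_notin_VC x : x \in NK e K -> x \notin VC v.
Proof.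
case/NK_nbr => k kK xk; apply: contraL xk => /VC_vc [j ->].
by rewrite vc_K.
Qed.

Lemma connect_sym_rS0 : connect_sym (rS0 e v).
Proof. by apply: sym_connect_sym => x y; rewrite /rS0 e_sym [(x \in _) && _]andbC. Qed.

Lemma NK_sees_C x : x \in NK e K -> has (bit (prof x)) (iota 0 5).
Proof.
move=> xN; apply: contraR (NK_notin_K xN) => /hasPn noC.
have xS0 : x \in S0 e v.
  rewrite inE NK_notin_VC //=; apply/eqP/setP => y; rewrite !inE.
  apply/andP => -[/VC_vc [j ->]]; apply/negP.
  by have := noC (j %% 5); rewrite mem_iota ltn_pmod // bit_prof vc_mod => /(_ isT).
have [k kK xk] := NK_nbr xN; have kS0 := K_S0 kK.
move: kK; case: hK => x0 _ ->; rewrite !inE => x0k.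
by apply: connect_trans x0k (connect1 _); rewrite /rS0 e_sym xk kS0 xS0.
Qed.

Lemma K_edge_cross (P : pred T) k0 k : k0 \in K -> k \in K -> P k0 -> ~~ P k ->
  exists y z, [/\ y \in K, z \in K, e y z, P y & ~~ P z].
Proof.
case: hK => x0 _ EK; rewrite EK !inE => x0k0 x0k Pk0 nPk.
have /connectP [p] : connect (rS0 e v) k0 k.
  by rewrite (connect_trans _ x0k) // connect_sym_rS0.
elim: p k0 x0k0 Pk0 => [|y p IH] k0 x0k0 Pk0 /=.
  by move=> _ kk0; rewrite kk0 Pk0 in nPk.
case/andP => k0y yp klast; have x0y : connect (rS0 e v) x0 y.
  exact: connect_trans x0k0 (connect1 k0y).
case: (boolP (P y)) => [Py | nPy]; first exact: IH x0y Py yp klast.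
by exists k0, y; case/and3P: k0y => k0y _ _; rewrite !inE x0k0 x0y.
Qed.

Lemma K_nonedge : exists a c, [/\ a \in K, c \in K, a != c & ~~ e a c].
Proof.
case: (boolP [exists a in K, exists c in K, (a != c) && ~~ e a c]).
  by case/existsP => a /andP [aK /existsP [c /and3P [cK neac nac]]]; exists a, c.
move/negP=> noedge; case: hKnc => a c aK cK neac; apply/negPn/negP => nac.
apply: noedge; apply/existsP; exists a; rewrite aK.
by apply/existsP; exists c; rewrite cK neac.
Qed.

Ltac neg_facts :=
  repeat match goal with H : is_true (~~ e _ _) |- _ => move/negbTE: H => H end.

Ltac adj_rewrite := repeat match goal with
  | H : is_true (e ?x ?y) |- context [e ?x ?y] => rewrite H
  | H : is_true (e ?x ?y) |- context [e ?y ?x] => rewrite (e_sym y x) H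
  | H : e ?x ?y = false |- context [e ?x ?y] => rewrite H
  | H : e ?x ?y = false |- context [e ?y ?x] => rewrite (e_sym y x) H
  | H : is_true (?k \in _) |- context [e ?k (vc ?j)] => rewrite (K_vc j H)
  | H : is_true (?k \in _) |- context [e (vc ?j) ?k] => rewrite (vc_K j H)
  end.

(* Both tactics reduce the arithmetic of indices modulo 5 to closed computations:
   the first by case analysis on a < 5, the second by checking all i : 'I_5. *)
Ltac case_rotation a lta := move: lta; generalize dependent a; case=> [|[|[|[|[|a]]]]] //.
Ltac all_rotations i := move: (nat_of_ord i) (mem_iota_ord i); apply/allP.

Ltac check_pattern a lta :=
  cbn [adj_pattern adj_row]; neg_facts; adj_rewrite; rewrite ?vc_adj; case_rotation a lta.

Lemma outside_no_gap x : x \notin VC v -> ~~ has_gap (prof x).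
Proof.
move=> xC; apply/hasP => -[a]; rewrite mem_iota /= !bit_prof => lta /and3P [xa xa1 xa2].
apply: noC4; apply: (@has_induced_C4 _ _ e_sym e_irr x (vc a) (vc (a + 1)) (vc (a + 2))).
- check_pattern a lta.
- by apply: contraNneq xC => ->; apply: vc_in_VC.
- by rewrite vc_eq; case_rotation a lta.
Qed.

Lemma NK_gap3_complete x : x \in NK e K -> gap_after (prof x) 3 -> complete_to e x K.
Proof.
move=> xN /hasP [a]; rewrite mem_iota /= !bit_prof => lta /andP [xa /and4P [xa1 xa2 xa3 _]].
move=> k kK; apply: contraT => nxk; exfalso.
have [k0 k0K xk0] := NK_nbr xN.
have [y [z [yK zK yz xy nxz]]] := K_edge_cross k0K kK xk0 nxk.
apply: noP7; apply: (has_induced_path_of_seq e_sym e_irr x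
  (s := [:: z; y; x; vc a; vc (a + 1); vc (a + 2); vc (a + 3)])) => //.
check_pattern a lta.
Qed.

Lemma NK_gap2_reach x k : x \in NK e K -> gap_after (prof x) 2 -> k \in K ->
  e x k \/ exists2 k1, k1 \in K & e x k1 && e k1 k.
Proof.
move=> xN /hasP [a]; rewrite mem_iota /= !bit_prof => lta /andP [xa /and3P [xa1 xa2 _]] kK.
pose P y := e x y || [exists k1 in K, e x k1 && e k1 y].
case: (boolP (P k)) => [/orP [xk | /existsP [k1 /andP [k1K xk1k]]] | nPk].
- by left.
- by right; exists k1.
exfalso.
have [k0 k0K xk0] := NK_nbr xN.
have [y [z [yK zK yz Py]]] := K_edge_cross (P := P) k0K kK (introT orP (or_introl xk0)) nPk.
rewrite negb_or negb_exists => /andP [nxz /forallP nz].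
have nxy : ~~ e x y by apply: contra (nz y) => xy; rewrite yK xy.
case/orP: Py => [xy | /existsP [k1 /andP [k1K /andP [xk1 k1y]]]].
  by rewrite xy in nxy.
have nk1z : ~~ e k1 z by apply: contra (nz k1) => k1z; rewrite k1K xk1.
apply: noP7; apply: (has_induced_path_of_seq e_sym e_irr x
  (s := [:: z; y; k1; x; vc a; vc (a + 1); vc (a + 2)])) => //.
check_pattern a lta.
Qed.

Definition common_nbr p q := [exists k in K, e p k && e q k].

Definition K_path p q :=
  [exists k1 in K, exists k2 in K, [&& e p k1, e k1 k2, e k2 q, ~~ e p k2 & ~~ e k1 q]].

Lemma common_nbr_sym p q : common_nbr p q = common_nbr q p.
Proof. by apply: eq_existsb => k; rewrite [e p k && _]andbC. Qed.

Lemma K_path_sym p q : K_path p q -> K_path q p.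
Proof.
case/existsP => k1 /andP [k1K /existsP [k2 /andP [k2K /and5P [pk1 k12 k2q npk2 nk1q]]]].
apply/existsP; exists k2; rewrite k2K; apply/existsP; exists k1; rewrite k1K.
by rewrite e_sym k2q e_sym k12 e_sym pk1 e_sym nk1q e_sym npk2.
Qed.

Lemma K_path_of_gap2 p q : p \in NK e K -> q \in NK e K -> ~~ common_nbr p q ->
  gap_after (prof p) 2 -> K_path p q.
Proof.
move=> pN qN /existsPn nocommon gap.
have [k2 k2K qk2] := NK_nbr qN.
have nocommon_at k : k \in K -> e p k -> ~~ e q k.
  by move=> kK pk; move: (nocommon k); rewrite kK pk.
have npk2 : ~~ e p k2 by apply/negP => pk2; move: (nocommon_at k2 k2K pk2); rewrite qk2.
case: (NK_gap2_reach pN gap k2K) => [pk2 | [k1 k1K /andP [pk1 k12]]].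
  by rewrite pk2 in npk2.
apply/existsP; exists k1; rewrite k1K; apply/existsP; exists k2.
by rewrite k2K pk1 k12 e_sym qk2 (e_sym k1) (nocommon_at k1 k1K pk1) npk2.
Qed.

Lemma not_both_complete p q : p != q -> ~~ e p q ->
  complete_to e p K -> complete_to e q K -> False.
Proof.
move=> neqpq npq pK qK; have [a [c [aK cK neac nac]]] := K_nonedge.
apply: noC4; apply: (@has_induced_C4 _ _ e_sym e_irr p a q c) => //.
cbn [adj_pattern adj_row].
by rewrite (pK a aK) (pK c cK) (e_sym a q) (qK a aK) (qK c cK) (negbTE npq) (negbTE nac).
Qed.

Lemma common_nbr_disjoint p q : p != q -> ~~ e p q -> common_nbr p q ->
  ~~ meets (prof p) (prof q).
Proof.
move=> neqpq npq /existsP [k /andP [kK /andP [pk qk]]].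
apply/hasP => -[a]; rewrite mem_iota /= !bit_prof => lta /andP [pa qa].
apply: noC4; apply: (@has_induced_C4 _ _ e_sym e_irr p k q (vc a)) => //.
- check_pattern a lta.
- by apply: contraNneq (K_notin_VC kK) => ->; apply: vc_in_VC.
Qed.

Lemma not_meets_twice p q : p != q -> ~~ e p q -> ~~ meets_twice (prof p) (prof q).
Proof.
move=> neqpq npq; apply/hasP => -[a]; rewrite mem_iota /= !bit_prof.
move=> lta /and4P [pa qa pa2 qa2].
apply: noC4; apply: (@has_induced_C4 _ _ e_sym e_irr p (vc a) q (vc (a + 2))) => //.
- check_pattern a lta.
- by rewrite vc_eq; case_rotation a lta.
Qed.

Lemma no_link1_of_adj p q : p \notin VC v -> q \notin VC v -> e p q ->
  ~~ link (prof p) (prof q) 1.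
Proof.
move=> pC qC pq; apply/hasP => -[x]; rewrite mem_iota /= !bit_prof.
move=> ltx /and5P [qx npx px1 nqx1 _].
apply: noC4; apply: (@has_induced_C4 _ _ e_sym e_irr q (vc x) (vc (x + 1)) p).
- check_pattern x ltx.
- by apply: contraNneq qC => ->; apply: vc_in_VC.
- by apply: contraNneq pC => <-; apply: vc_in_VC.
Qed.

Lemma no_link3_of_adj p q : e p q -> ~~ link (prof p) (prof q) 3.
Proof.
move=> pq; apply/hasP => -[x]; rewrite mem_iota /= !bit_prof.
move=> ltx /and5P [qx npx px3 nqx3 /and3P [/andP [npx1 nqx1] /andP [npx2 nqx2] _]].
apply: noC6; apply: (has_induced_cycle_of_seq e_sym e_irr p
  (s := [:: p; q; vc x; vc (x + 1); vc (x + 2); vc (x + 3)])) => //.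
check_pattern x ltx.
Qed.

Lemma no_link2_of_common_nbr p q : ~~ e p q -> common_nbr p q ->
  ~~ link (prof p) (prof q) 2.
Proof.
move=> npq /existsP [k /andP [kK /andP [pk qk]]].
apply/hasP => -[x]; rewrite mem_iota /= !bit_prof.
move=> ltx /and5P [qx npx px2 nqx2 /andP [/andP [npx1 nqx1] _]].
apply: noC6; apply: (has_induced_cycle_of_seq e_sym e_irr p
  (s := [:: p; k; q; vc x; vc (x + 1); vc (x + 2)])) => //.
check_pattern x ltx.
Qed.

Lemma no_link1_of_K_path p q : ~~ e p q -> K_path p q -> ~~ link (prof p) (prof q) 1.
Proof.
move=> npq /existsP [k1 /andP [k1K /existsP [k2 /andP [k2K]]]].
case/and5P => pk1 k12 k2q npk2 nk1q; apply/hasP => -[x]; rewrite mem_iota /= !bit_prof.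
move=> ltx /and5P [qx npx px1 nqx1 _].
apply: noC6; apply: (has_induced_cycle_of_seq e_sym e_irr p
  (s := [:: p; k1; k2; q; vc x; vc (x + 1)])) => //.
check_pattern x ltx.
Qed.

Lemma no_link2_of_K_path p q : ~~ e p q -> K_path p q -> ~~ link (prof p) (prof q) 2.
Proof.
move=> npq /existsP [k1 /andP [k1K /existsP [k2 /andP [k2K]]]].
case/and5P => pk1 k12 k2q npk2 nk1q; apply/hasP => -[x]; rewrite mem_iota /= !bit_prof.
move=> ltx /and5P [qx npx px2 nqx2 /andP [/andP [npx1 nqx1] _]].
apply: noC7; apply: (has_induced_cycle_of_seq e_sym e_irr p
  (s := [:: p; k1; k2; q; vc x; vc (x + 1); vc (x + 2)])) => //.
check_pattern x ltx.
Qed.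

Lemma NK_nonadj_classified p q : p \in NK e K -> q \in NK e K -> p != q -> ~~ e p q ->
  classified (prof p) (prof q).
Proof.
move=> pN qN neqpq npq.
have nqp : ~~ e q p by rewrite e_sym.
have [pC qC] := (NK_notin_VC pN, NK_notin_VC qN).
have not_both_gap3 : ~~ (gap_after (prof p) 3 && gap_after (prof q) 3).
  apply/andP => -[/(NK_gap3_complete pN) pK /(NK_gap3_complete qN) qK].
  exact: not_both_complete neqpq npq pK qK.
have gap3_common : (gap_after (prof p) 3 || gap_after (prof q) 3) ==> common_nbr p q.
  apply/implyP => /orP [/(NK_gap3_complete pN) pK | /(NK_gap3_complete qN) qK].
    by have [k kK qk] := NK_nbr qN; apply/existsP; exists k; rewrite kK pK.
  by have [k kK pk] := NK_nbr pN; apply/existsP; exists k; rewrite kK pk qK.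
have common_disjoint : common_nbr p q ==> ~~ meets (prof p) (prof q).
  exact/implyP/common_nbr_disjoint.
have common_no_link2 :
    common_nbr p q ==> ~~ link (prof p) (prof q) 2 && ~~ link (prof q) (prof p) 2.
  apply/implyP => common; rewrite no_link2_of_common_nbr //.
  by rewrite no_link2_of_common_nbr // common_nbr_sym.
have gap2_no_link : ~~ common_nbr p q && (gap_after (prof p) 2 || gap_after (prof q) 2) ==>
    [&& ~~ link (prof p) (prof q) 1, ~~ link (prof q) (prof p) 1,
        ~~ link (prof p) (prof q) 2 & ~~ link (prof q) (prof p) 2].
  apply/implyP => /andP [nocommon gap2].
  have path_pq : K_path p q.
    case/orP: gap2 => [|gap]; first exact: K_path_of_gap2.
    by apply/K_path_sym/K_path_of_gap2; rewrite // common_nbr_sym.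
  have path_qp := K_path_sym path_pq.
  by rewrite !no_link1_of_K_path ?no_link2_of_K_path.
apply: (admissible_classified (c := common_nbr p q)); rewrite ?size_prof //.
by rewrite /admissible !NK_sees_C // !outside_no_gap // not_meets_twice //=;
  rewrite not_both_gap3 gap3_common common_disjoint common_no_link2 gap2_no_link.
Qed.

Definition trace (X : {set T}) : seq bool := mkseq (fun j => vc j \in X) 5.

Lemma mem_Sset x (X : {set T}) : X \subset VC v ->
  (x \in Sset e v X) = (x \notin VC v) && (prof x == trace X).
Proof.
move=> /subsetP XC; rewrite inE; case: (x \notin VC v) => //=.
apply/eqP/eqP => [<- | eq_prof]; first by apply: eq_mkseq => j; rewrite inE vc_in_VC.
apply/setP => y; rewrite inE; case: (boolP (y \in VC v)) => [/VC_vc [j ->] | yC] /=.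
  have := congr1 (nth false ^~ (j %% 5)) eq_prof.
  by rewrite !nth_mkseq ?ltn_pmod // vc_mod.
by apply/esym/negbTE; apply: contra yC; apply: XC.
Qed.

Lemma mem_Sset_cyc x (X : {set T}) i ds :
  (forall y, (y \in X) = has (fun d => y == vc (i + d)) ds) ->
  (x \in Sset e v X) = (x \notin VC v) && (prof x == cyc_set i ds).
Proof.
move=> memX; rewrite mem_Sset; last first.
  by apply/subsetP => y; rewrite memX => /hasP [d _ /eqP ->]; apply: vc_in_VC.
congr (_ && (_ == _)); apply: eq_mkseq => j; rewrite memX.
by apply: eq_has => d; apply: vc_eq.
Qed.

Lemma mem_S3 x (i : 'I_5) :
  (x \in S3 e v i) = (x \notin VC v) && (prof x == cyc_set i [:: 4; 0; 1]).
Proof. by apply: mem_Sset_cyc => y; rewrite !inE -(vc_val i) /= addn0 orbF -orbA. Qed.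

Lemma mem_S2 x (i : 'I_5) :
  (x \in S2 e v i) = (x \notin VC v) && (prof x == cyc_set i [:: 3; 2]).
Proof. by apply: mem_Sset_cyc => y; rewrite !inE /= orbF. Qed.

Lemma NK_S2_complete (i : 'I_5) p : p \in NK e K -> p \in S2 e v i -> complete_to e p K.
Proof.
move=> pN; rewrite mem_S2 => /andP [_ /eqP pi]; apply: NK_gap3_complete pN _.
by rewrite pi; all_rotations i.
Qed.

Lemma NK_S3_exclusive (i : 'I_5) :
  NK e K :&: S3 e v i = set0 \/ NK e K :&: S3 e v (sh i 2) = set0.
Proof.
case: (set_0Vmem (NK e K :&: S3 e v i)) => [-> | [p]]; first by left.
case: (set_0Vmem (NK e K :&: S3 e v (sh i 2))) => [-> | [q]]; first by right.
rewrite !in_setI !mem_S3 val_sh cyc_set_mod => /and3P [qN _ /eqP qi] /and3P [pN _ /eqP pi].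
exfalso; have [pq | npq] := boolP (e p q).
  have := no_link1_of_adj (NK_notin_VC pN) (NK_notin_VC qN) pq.
  by rewrite pi qi; move/negP; apply; all_rotations i.
have neqpq : p != q.
  by apply/eqP => epq; move: pi; rewrite epq qi; apply/eqP; all_rotations i.
have := NK_nonadj_classified pN qN neqpq npq.
by rewrite pi qi; apply/negP; all_rotations i.
Qed.

Lemma NK_nonadj_S3_S2 p q : p \in NK e K -> q \in NK e K -> p != q -> ~~ e p q ->
  exists i : 'I_5, (p \in S3 e v i /\ q \in S2 e v i) \/ (q \in S3 e v i /\ p \in S2 e v i).
Proof.
move=> pN qN neqpq npq.
case: (classifiedP (NK_nonadj_classified pN qN neqpq npq)) => i [[pi qi] | [qi pi]];
  exists i; [left | right]; by rewrite mem_S3 mem_S2 !NK_notin_VC // pi qi !eqxx.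
Qed.

Lemma NK_no_S2_pair (i : 'I_5) q q' : q \in NK e K -> q' \in NK e K -> q \in S2 e v i ->
  q' \in Sset e v [set v (sh i 3); v (sh i 4)] -> False.
Proof.
move=> qN q'N; rewrite mem_S2 => /andP [_ /eqP qi].
rewrite (mem_Sset_cyc _ (i := i) (ds := [:: 3; 4])); last by move=> y; rewrite !inE /= orbF.
case/andP => _ /eqP q'i.
have [qq' | nqq'] := boolP (e q q').
  by have := no_link3_of_adj qq'; rewrite qi q'i; move/negP; apply; all_rotations i.
have neqqq' : q != q'.
  by apply/eqP => eqq; move: qi; rewrite eqq q'i; apply/eqP; all_rotations i.
have := NK_nonadj_classified qN q'N neqqq' nqq'.
by rewrite qi q'i; apply/negP; all_rotations i.
Qed.
End InducedC5.

Theorem lemma9p1 (T : finType) (e : rel T)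
  (e_sym : symmetric e) (e_irr : irreflexive e)
  (noP7 : ~ has_induced_path e 7) (noC4 : ~ has_induced_cycle e 4)
  (noC6 : ~ has_induced_cycle e 6) (noC7 : ~ has_induced_cycle e 7)
  (v : 'I_5 -> T) (hC : induced_cycle e v)
  (K : {set T}) (hK : is_component_S0 e v K) (hKnc : ~ is_clique e K) :
  (* (1) *)
  (forall (i : 'I_5) p, p \in NK e K -> p \in S2 e v i -> complete_to e p K) /\
  (* (2) *)
  (forall i : 'I_5, NK e K :&: S3 e v i = set0 \/ NK e K :&: S3 e v (sh i 2) = set0) /\
  (* (3) *)
  (forall p q, p \in NK e K -> q \in NK e K -> p != q -> ~~ e p q ->
     exists i : 'I_5, (p \in S3 e v i /\ q \in S2 e v i) \/
                      (q \in S3 e v i /\ p \in S2 e v i)) /\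
  (* (4) *)
  (forall i : 'I_5, ~ exists p p' q q',
     [/\ p \in NK e K, p' \in NK e K, q \in NK e K & q' \in NK e K] /\
     [/\ p \in S3 e v i, q \in S2 e v i, p' \in S3 e v (sh i 1) &
         q' \in Sset e v [set v (sh i 3); v (sh i 4)]]).
Proof.
split; first by move=> i p; apply: NK_S2_complete.
split; first by move=> i; apply: NK_S3_exclusive.
split; first by move=> p q; apply: NK_nonadj_S3_S2.
move=> i [p [p' [q [q' [[_ _ qN q'N] [_ qS _ q'S]]]]]].
by move: qN q'N qS q'S; apply: NK_no_S2_pair.
Qed.
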